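(* For $n\ge1$ let $G_n$ be the number of domino tilings of $C_4\times P_n$. Let $g_n$ be the number of domino tilings of the graph obtained from $C_4\times P_n$ by deleting two adjacent vertices of the end copy $C_4\times\{1\}$, together with their incident edges. Then $$G_n=2G_{n-1}+G_{n-2}+4g_{n-1}\quad(n\ge3),\qquad g_n=G_{n-1}+g_{n-1}\quad(n\ge2).$$ Both sequences satisfy $x_n=3x_{n-1}+3x_{n-2}-x_{n-3}$ for $n\ge4$. For all $n\ge1$, $$g_n=\frac1{12}\Big[(1+\sqrt3)(2+\sqrt3)^n+(1-\sqrt3)(2-\sqrt3)^n\Big]-\frac16(-1)^n .$$
   Context: $H\times K$ denotes the Cartesian product of graphs. $P_n$ is the path with vertex set $\{1,\dots,n\}$ and $C_4$ is the $4$-cycle. For a graph $H$, the subgraph $H\times\{1\}$ of $H\times P_n$ is called its end copy. A domino tiling of a finite graph is a perfect matching, and ''number of domino tilings'' means the number of perfect matchings. *)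

From HB Require Import structures.
From mathcomp Require Import all_boot all_order all_algebra.
Set Implicit Arguments. Unset Strict Implicit. Unset Printing Implicit Defensive.

Definition perfect_matching (T : finType) (adj : rel T) (S : {set T})
    (M : {set {set T}}) : bool :=
  [forall e in M, exists u, exists v,
      [&& e == [set u; v], adj u v, u \in S & v \in S]] &&
  [forall x in S, #|[set e in M | x \in e]| == 1%N].

Definition num_pm (T : finType) (adj : rel T) (S : {set T}) : nat :=
  #|[set M : {set {set T}} | perfect_matching adj S M]|.

(* C4 x P_n : vertex (i, k) with i in Z/4 (cycle position), k in {0..n-1}
   (layer k corresponds to the path vertex k+1). *)
Definition cp_vertex (n : nat) : finType := ('I_4 * 'I_n)%type.

Definition cp_adj (n : nat) : rel (cp_vertex n) :=
  fun u v =>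
    ((val u.2 == val v.2) &&
       ((((val u.1).+1 %% 4) == val v.1) || (((val v.1).+1 %% 4) == val u.1)))
    || ((val u.1 == val v.1) &&
       (((val u.2).+1 == val v.2) || ((val v.2).+1 == val u.2))).

Definition G (n : nat) : nat := num_pm (@cp_adj n) [set: cp_vertex n].

Definition g (n : nat) : nat :=
  num_pm (@cp_adj n) [set x : cp_vertex n | ~~ ((val x.2 == 0%N) && (val x.1 <= 1)%N)].

From HB Require Import structures.
From mathcomp Require Import all_boot all_order all_algebra zify ring.
Import Order.TTheory GRing.Theory Num.Theory.
Set Implicit Arguments. Unset Strict Implicit. Unset Printing Implicit Defensive.

(* The proof is a transfer-matrix argument carried out by hand.
   1. For any finite graph with a symmetric adjacency relation, the perfect
      matchings of a vertex set S are counted by expanding along a vertex x: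
      #PM(S) = sum over the neighbours y of x in S of #PM(S - x - y)
      (pm_expand).  A graph isomorphism preserves the number of perfect
      matchings (card_pm_transport).
   2. On C4 x P_n, shifting every vertex one layer up (composed with a rotation
      of C4) is an isomorphism onto the graph with the end layer removed
      (card_pm_shift).  Expanding the end layer vertex by vertex therefore
      reduces every count to G or g of shorter cylinders, which gives
      g_{n+2} = G_{n+1} + g_{n+1} and G_{n+2} = 2G_{n+1} + G_n + 4g_{n+1}.
   3. Eliminating G (resp. g) from these two recurrences yields the common
      third-order recurrence x_{n+3} = 3x_{n+2} + 3x_{n+1} - x_n, which the
      closed form also satisfies; comparing g_1, g_2, g_3 proves the formula. *)

Section PerfectMatchings.
Variables (T : finType) (adj : rel T).
Hypothesis adj_sym : symmetric adj.

Definition pm_set (S : {set T}) : {set {set {set T}}} :=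
  [set M | perfect_matching adj S M].

Lemma pm_edge S M e : perfect_matching adj S M -> e \in M ->
  exists u v, [/\ e = [set u; v], adj u v, u \in S & v \in S].
Proof.
case/andP=> /forallP edgesM _ eM; move/implyP: (edgesM e) => /(_ eM).
by case/existsP=> u /existsP [v /and4P [/eqP -> ? ? ?]]; exists u, v.
Qed.

Lemma pm_cover S M z : perfect_matching adj S M -> z \in S ->
  #|[set e in M | z \in e]| = 1.
Proof. by case/andP=> _ /forallP coverM zS; move/implyP: (coverM z) => /(_ zS) /eqP. Qed.

Lemma pm_edge_sub S M e z : perfect_matching adj S M -> e \in M -> z \in e -> z \in S.
Proof.
move=> pm eM; case: (pm_edge pm eM) => u [v [-> _ uS vS]].
by case/set2P=> ->.
Qed.

Lemma pm_edge_uniq S M z e1 e2 : perfect_matching adj S M -> z \in S ->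
  e1 \in M -> e2 \in M -> z \in e1 -> z \in e2 -> e1 = e2.
Proof.
move=> pm zS e1M e2M z1 z2; have /eqP/cards1P [f coverz] := pm_cover pm zS.
have : e1 \in [set f] by rewrite -coverz inE e1M.
have : e2 \in [set f] by rewrite -coverz inE e2M.
by rewrite !inE => /eqP -> /eqP ->.
Qed.

Lemma set2_inj (x : T) : injective (fun y : T => [set x; y]).
Proof.
move=> y y' E; have : y \in [set x; y'] by rewrite -E set22.
have : y' \in [set x; y] by rewrite E set22.
by case/set2P=> [->|//]; case/set2P.
Qed.

Section FixedEdge.
Variables (S : {set T}) (x y : T).
Hypotheses (xS : x \in S) (yS : y \in S) (axy : adj x y).
Let e := [set x; y].
Let S' := S :\ x :\ y.

Lemma in_removed z : (z \in S') = (z \notin e) && (z \in S).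
Proof. by rewrite !inE; case: (z == x); case: (z == y). Qed.

Lemma cover_setU1_edge (M : {set {set T}}) z : z \notin e ->
  [set f in e |: M | z \in f] = [set f in M | z \in f].
Proof.
move=> ze; apply/setP=> f; rewrite !inE.
by have [->|//] := eqVneq f e; rewrite (negbTE ze) !andbF.
Qed.

Lemma cover_setD1_edge (M : {set {set T}}) z : z \notin e ->
  [set f in M :\ e | z \in f] = [set f in M | z \in f].
Proof.
move=> ze; apply/setP=> f; rewrite !inE.
by have [->|//] := eqVneq f e; rewrite (negbTE ze) !andbF.
Qed.

Lemma pm_add_edge M' : perfect_matching adj S' M' -> perfect_matching adj S (e |: M').
Proof.
move=> pm'; apply/andP; split.
  apply/forallP=> f; apply/implyP; rewrite in_setU1 => /orP [/eqP -> |fM].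
    by apply/existsP; exists x; apply/existsP; exists y; rewrite eqxx axy xS yS.
  case: (pm_edge pm' fM) => u [v [-> auv uS vS]].
  apply/existsP; exists u; apply/existsP; exists v.
  by move: uS vS; rewrite !in_removed eqxx auv => /andP [_ ->] /andP [_ ->].
apply/forallP=> z; apply/implyP=> zS; case zS': (z \in S').
  move: (zS'); rewrite in_removed => /andP [ze _].
  by rewrite cover_setU1_edge // (pm_cover pm' zS').
have ze : z \in e by move: zS'; rewrite in_removed zS andbT => /negbFE.
apply/cards1P; exists e; apply/setP=> f; rewrite !inE.
apply/idP/idP; last by move/eqP ->; rewrite eqxx ze.
by case/andP=> /orP [//|fM] zf; rewrite (pm_edge_sub pm' fM zf) in zS'.
Qed.

Lemma pm_remove_edge M : perfect_matching adj S M -> e \in M ->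
  perfect_matching adj S' (M :\ e).
Proof.
move=> pm eM; apply/andP; split.
  apply/forallP=> f; apply/implyP; rewrite in_setD1 => /andP [fe fM].
  case: (pm_edge pm fM) => u [v [Ef auv uS vS]].
  have outside w : w \in f -> w \notin e.
    move=> wf; apply/negP=> we; move: fe.
    by rewrite (pm_edge_uniq pm (pm_edge_sub pm eM we) fM eM wf we) eqxx.
  apply/existsP; exists u; apply/existsP; exists v; rewrite Ef eqxx auv.
  by rewrite !in_removed uS vS !outside // Ef ?set21 ?set22.
apply/forallP=> z; apply/implyP; rewrite in_removed => /andP [ze zS].
by rewrite cover_setD1_edge // (pm_cover pm zS).
Qed.

Lemma card_pm_with_edge : #|[set M in pm_set S | e \in M]| = #|pm_set S'|.
Proof.
have e_notin M' : M' \in pm_set S' -> e \notin M'.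
  rewrite inE => pm'; apply/negP=> eM'; have := pm_edge_sub pm' eM' (set21 x y).
  by rewrite in_removed set21.
symmetry; rewrite -(@card_in_imset _ _ (fun M => e |: M) (pm_set S')); last first.
  move=> M1 M2 /e_notin p1 /e_notin p2 E.
  by rewrite -(setU1K p1) -(setU1K p2) E.
apply: eq_card=> M; rewrite [in RHS]inE; apply/imsetP/idP.
  by case=> M'; rewrite inE => pm' ->; rewrite inE pm_add_edge // setU11.
case/andP; rewrite inE => pm eM; exists (M :\ e); first by rewrite inE pm_remove_edge.
by rewrite setD1K.
Qed.

End FixedEdge.

(* Expansion along a vertex x of S: every perfect matching matches x with
   exactly one neighbour y. *)
Lemma pm_expand (S : {set T}) x : x \in S ->
  #|pm_set S| = \sum_(y in S | adj x y) #|pm_set (S :\ x :\ y)|.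
Proof.
move=> xS.
transitivity (\sum_(y in S | adj x y) #|[set M in pm_set S | [set x; y] \in M]|);
  last by apply: eq_bigr => y /andP [yS axy]; apply: card_pm_with_edge.
under eq_bigr do rewrite -sum1_card.
rewrite (exchange_big_dep (mem (pm_set S))) /=; last by move=> y M _; rewrite inE => /andP [].
rewrite -sum1_card; apply: eq_bigr => M pm; rewrite inE in pm; symmetry.
have -> : \sum_(y | (y \in S) && adj x y && (M \in [set M0 in pm_set S | [set x; y] \in M0])) 1
          = #|[set y | (y \in S) && adj x y && ([set x; y] \in M)]|.
  by rewrite -sum1_card; apply: eq_bigl => y; rewrite !inE pm.
rewrite -(card_imset _ (@set2_inj x)) -(pm_cover pm xS).
apply: eq_card => f; rewrite [in RHS]inE; apply/imsetP/andP.
  by case=> y; rewrite inE => /andP [_ ?] ->; rewrite set21.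
case=> fM xf; case: (pm_edge pm fM) => u [v [Ef auv uS vS]].
move: xf; rewrite Ef => /set2P [] X; subst x.
  by exists v; rewrite // inE auv vS -Ef fM.
by exists u; rewrite 1?setUC // inE adj_sym auv uS /= setUC -Ef.
Qed.

Lemma card_pm_set0 : #|pm_set set0| = 1.
Proof.
apply/eqP/cards1P; exists set0; apply/setP=> M; rewrite !inE; apply/idP/idP.
  move=> pm; apply/eqP/setP=> f; rewrite inE; apply/negP=> fM.
  by case: (pm_edge pm fM) => u [v [_ _]]; rewrite inE.
by move/eqP->; apply/andP; split; apply/forallP=> z; apply/implyP; rewrite inE.
Qed.

End PerfectMatchings.

Section Transport.
Variables (T T' : finType) (adj : rel T) (adj' : rel T') (h : T -> T').
Variables (S : {set T}) (S' : {set T'}).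
Hypotheses (h_inj : injective h) (h_adj : forall u v, adj' (h u) (h v) = adj u v).
Hypotheses (h_mem : forall x, (h x \in S') = (x \in S))
           (h_onto : forall y, y \in S' -> exists x, h x = y).

Let lift (e : {set T}) : {set T'} := h @: e.

Let lift_inj : injective lift := imset_inj h_inj.

Let lift2 u v : lift [set u; v] = [set h u; h v].
Proof. by rewrite /lift imsetU1 imset_set1. Qed.

Let mem_lift w e : (h w \in lift e) = (w \in e).
Proof. by rewrite /lift mem_imset. Qed.

Lemma pm_lift M : perfect_matching adj S M -> perfect_matching adj' S' (lift @: M).
Proof.
move=> pm; apply/andP; split.
  apply/forallP=> E; apply/implyP => /imsetP [e eM ->].
  case: (pm_edge pm eM) => u [v [-> a uS vS]].
  apply/existsP; exists (h u); apply/existsP; exists (h v).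
  by rewrite lift2 eqxx h_adj a !h_mem uS vS.
apply/forallP=> z; apply/implyP=> zS; case: (h_onto zS) => w hw; subst z.
rewrite h_mem in zS; rewrite -(pm_cover pm zS) -(card_imset _ lift_inj).
apply/eqP; apply: eq_card => E; rewrite [in LHS]inE; apply/andP/imsetP.
  by case=> /imsetP [e eM ->]; rewrite mem_lift => we; exists e; rewrite // inE eM.
case=> e; rewrite inE => /andP [eM we] ->.
by rewrite mem_lift we; split => //; apply/imsetP; exists e.
Qed.

Lemma pm_edge_lifted Z E : perfect_matching adj' S' Z -> E \in Z ->
  exists u v, [/\ E = lift [set u; v], adj u v, u \in S & v \in S].
Proof.
move=> pm EZ; case: (pm_edge pm EZ) => u' [v' [-> a uS vS]].
case: (h_onto uS) => u hu; case: (h_onto vS) => v hv; subst u' v'.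
by exists u, v; rewrite lift2 -h_adj -!h_mem.
Qed.

Lemma lift_preimage Z : perfect_matching adj' S' Z -> lift @: (lift @^-1: Z) = Z.
Proof.
move=> pm; apply/setP=> E; apply/imsetP/idP; first by case=> e; rewrite inE => eZ ->.
by move=> EZ; case: (pm_edge_lifted pm EZ) => u [v [E' _ _ _]]; exists [set u; v]; rewrite // inE -E'.
Qed.

Lemma pm_unlift Z : perfect_matching adj' S' Z ->
  perfect_matching adj S (lift @^-1: Z).
Proof.
move=> pm; apply/andP; split.
  apply/forallP=> e; apply/implyP; rewrite inE => eZ.
  case: (pm_edge_lifted pm eZ) => u [v [E a uS vS]].
  apply/existsP; exists u; apply/existsP; exists v.
  by rewrite (lift_inj E) eqxx a uS vS.
apply/forallP=> w; apply/implyP=> wS; have hwS : h w \in S' by rewrite h_mem.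
rewrite -(pm_cover pm hwS) -(card_imset _ lift_inj).
apply/eqP; apply: eq_card => E; rewrite [in RHS]inE; apply/imsetP/andP.
  by case=> e; rewrite !inE => /andP [eZ we] ->; rewrite eZ mem_lift.
case=> EZ hwE; case: (pm_edge_lifted pm EZ) => u [v [E' _ _ _]].
by exists [set u; v]; rewrite // !inE -E' EZ /=; move: hwE; rewrite E' mem_lift !inE.
Qed.

Lemma card_pm_transport : #|pm_set adj' S'| = #|pm_set adj S|.
Proof.
rewrite -(card_imset (pm_set adj S) (imset_inj lift_inj)).
apply: eq_card => Z; rewrite inE; apply/idP/imsetP.
  by move=> pm; exists (lift @^-1: Z); rewrite ?inE ?pm_unlift ?lift_preimage.
by case=> M; rewrite inE => pm ->; apply: pm_lift.
Qed.

End Transport.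

Definition cp_v n (i k : nat) (Hi : i < 4) (Hk : k < n) : cp_vertex n :=
  (Ordinal Hi, Ordinal Hk).
Notation vtx n i k := (@cp_v n i k isT isT).

Lemma cp_sym n : symmetric (@cp_adj n).
Proof.
move=> u v; rewrite /cp_adj (eq_sym (val u.2)) (eq_sym (val u.1)).
by rewrite (orbC ((val u.1).+1 %% 4 == val v.1)) (orbC ((val u.2).+1 == val v.2)).
Qed.

Lemma cp_expand n (S : {set cp_vertex n}) x (ys : seq (cp_vertex n)) :
  x \in S -> uniq ys -> (forall y, (y \in S) && cp_adj x y = (y \in ys)) ->
  #|pm_set (@cp_adj n) S| = \sum_(y <- ys) #|pm_set (@cp_adj n) (S :\ x :\ y)|.
Proof.
move=> xS ys_uniq nbrs; rewrite (pm_expand (@cp_sym n) xS) big_uniq //.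
by apply: eq_bigl => y; rewrite -nbrs.
Qed.

Definition rot (r : nat) (i : 'I_4) : 'I_4 := Ordinal (ltn_pmod (i + r) (isT : 0 < 4)).

Definition shift_up m r (x : cp_vertex m) : cp_vertex m.+1 :=
  (rot r x.1, @Ordinal m.+1 (val x.2).+1 (ltn_ord x.2)).

Lemma card_pm_shift m r (S : {set cp_vertex m}) (S' : {set cp_vertex m.+1}) : r < 4 ->
  (forall x, (shift_up r x \in S') = (x \in S)) -> (forall y, y \in S' -> val y.2 != 0) ->
  #|pm_set (@cp_adj m.+1) S'| = #|pm_set (@cp_adj m) S|.
Proof.
move=> r4 hS bottom_free; apply: (card_pm_transport (h := shift_up r)) => //.
- move=> [i [k Hk]] [j [l Hl]] /eqP; rewrite xpair_eqE => /andP [E1 E2].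
  move: E1 E2; case: r r4 {hS} => [|[|[|[|r]]]] // _;
  case: i => [[|[|[|[|i]]]] Hi] //; case: j => [[|[|[|[|j]]]] Hj] //= _ E2;
  by move/eqP/(congr1 val): E2 => /= [E]; subst l; congr pair; apply: val_inj.
- move=> [[i Hi] [k Hk]] [[j Hj] [l Hl]].
  case: r r4 {hS} => [|[|[|[|r]]]] // _;
  case: i Hi => [|[|[|[|i]]]] Hi //; case: j Hj => [|[|[|[|j]]]] Hj //.
- move=> [i [[|k] Hk]] yS; first by have := bottom_free _ yS.
  exists (rot (4 - r) i, @Ordinal m k Hk).
  apply/eqP; rewrite xpair_eqE; apply/andP; split; last by apply/eqP; apply: val_inj.
  case: r r4 {hS} => [|[|[|[|r]]]] // _; case: i {yS} => [[|[|[|[|i]]]] Hi] //.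
Qed.

Definition end_cut m : {set cp_vertex m} :=
  [set x : cp_vertex m | ~~ ((val x.2 == 0) && (val x.1 <= 1))].

(* Side conditions of cp_expand and card_pm_shift only concern the vertices in
   the two lowest layers; they are decided by enumerating those vertices. *)
Ltac vertex_cases := move=> [[[|[|[|[|?]]]] ?] [[|[|?]] ?]]; rewrite ?inE //=.
Ltac finite_checks := try (by vertex_cases); try (by rewrite !inE).

Section Recurrences.
Variable n : nat.
Local Notation v i k := (vtx n.+2 i k).
Local Notation P S := #|pm_set (@cp_adj n.+2) S|.

Lemma end_cut_E : end_cut n.+2 = setT :\ v 0 0 :\ v 1 0.
Proof. by apply/setP; vertex_cases. Qed.

(* Match (2,0) with (3,0), leaving a full cylinder one layer shorter, or with
   (2,1), which forces (3,0)-(3,1) and leaves a rotated copy of end_cut. *)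
Lemma g_rec : g n.+2 = G n.+1 + g n.+1.
Proof.
change (P (end_cut n.+2) = G n.+1 + g n.+1).
rewrite (cp_expand (x := v 2 0) (ys := [:: v 3 0; v 2 1])) //; finite_checks.
rewrite !big_cons big_nil addn0 (card_pm_shift (r := 0) (S := setT)) //; finite_checks.
congr (_ + _).
rewrite (cp_expand (x := v 3 0) (ys := [:: v 3 1])) //; finite_checks.
rewrite !big_cons big_nil addn0.
by rewrite (card_pm_shift (r := 2) (S := end_cut n.+1)) //; finite_checks.
Qed.

(* The mirror image: the adjacent pair (0,0), (3,0) removed. *)
Lemma card_cut_03 : P (setT :\ v 0 0 :\ v 3 0) = G n.+1 + g n.+1.
Proof.
rewrite (cp_expand (x := v 1 0) (ys := [:: v 2 0; v 1 1])) //; finite_checks.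
rewrite !big_cons big_nil addn0 (card_pm_shift (r := 0) (S := setT)) //; finite_checks.
congr (_ + _).
rewrite (cp_expand (x := v 2 0) (ys := [:: v 2 1])) //; finite_checks.
rewrite !big_cons big_nil addn0.
by rewrite (card_pm_shift (r := 1) (S := end_cut n.+1)) //; finite_checks.
Qed.

(* The vertical domino (0,0)-(0,1) removed: the path (1,0),(2,0),(3,0) of the
   end layer is matched either as (1,0)-(1,1) and (2,0)-(3,0) or (3,0)-(3,1),
   or as (1,0)-(2,0) with (3,0)-(3,1). *)
Lemma card_cut_vertical : P (setT :\ v 0 0 :\ v 0 1) = 2 * g n.+1 + G n.
Proof.
rewrite (cp_expand (x := v 1 0) (ys := [:: v 2 0; v 1 1])) //; finite_checks.
rewrite !big_cons big_nil addn0 mul2n -addnn -addnA.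
congr (_ + _).
  rewrite (cp_expand (x := v 3 0) (ys := [:: v 3 1])) //; finite_checks.
  rewrite !big_cons big_nil addn0.
  by rewrite (card_pm_shift (r := 3) (S := end_cut n.+1)) //; finite_checks.
rewrite (cp_expand (x := v 2 0) (ys := [:: v 3 0; v 2 1])) //; finite_checks.
rewrite !big_cons big_nil addn0.
rewrite (card_pm_shift (r := 0) (S := end_cut n.+1)) //; finite_checks.
congr (_ + _).
rewrite (cp_expand (x := v 3 0) (ys := [:: v 3 1])) //; finite_checks.
rewrite !big_cons big_nil addn0.
rewrite (card_pm_shift (r := 0) (S := [set x : cp_vertex n.+1 | val x.2 != 0])) //;
  finite_checks.
by rewrite (card_pm_shift (r := 0) (S := setT)) //; finite_checks.
Qed.

(* Expanding at (0,0): its partner is (1,0), (3,0) or (0,1). *)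
Lemma G_rec : G n.+2 = 2 * G n.+1 + G n + 4 * g n.+1.
Proof.
change (P setT = 2 * G n.+1 + G n + 4 * g n.+1).
rewrite (cp_expand (x := v 0 0) (ys := [:: v 1 0; v 3 0; v 0 1])) //; finite_checks.
rewrite !big_cons big_nil addn0 card_cut_03 card_cut_vertical.
have -> : P (setT :\ v 0 0 :\ v 1 0) = g n.+2 by rewrite -end_cut_E.
by rewrite g_rec; lia.
Qed.

End Recurrences.

Lemma card_pm_empty m (S : {set cp_vertex m}) : S = set0 -> #|pm_set (@cp_adj m) S| = 1.
Proof. by move->; apply: card_pm_set0. Qed.

Lemma G0 : G 0 = 1.
Proof. by apply: card_pm_empty; apply/setP; case=> ? []. Qed.

Lemma G1 : G 1 = 2.
Proof.
change (#|pm_set (@cp_adj 1) setT| = 2).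
rewrite (cp_expand (x := vtx 1 0 0) (ys := [:: vtx 1 1 0; vtx 1 3 0])) //; finite_checks.
rewrite !big_cons big_nil addn0.
rewrite (cp_expand (x := vtx 1 2 0) (ys := [:: vtx 1 3 0])) //; finite_checks.
rewrite (cp_expand (x := vtx 1 1 0) (ys := [:: vtx 1 2 0])) //; finite_checks.
by rewrite !big_cons !big_nil !addn0 !card_pm_empty //; apply/setP; vertex_cases.
Qed.

Lemma g1 : g 1 = 1.
Proof.
change (#|pm_set (@cp_adj 1) (end_cut 1)| = 1).
rewrite (cp_expand (x := vtx 1 2 0) (ys := [:: vtx 1 3 0])) //; finite_checks.
by rewrite !big_cons !big_nil !addn0 !card_pm_empty //; apply/setP; vertex_cases.
Qed.

(* Eliminating the other sequence from g_rec and G_rec. *)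
Lemma g_rec3 m : g m.+4 + g m.+1 = 3 * g m.+3 + 3 * g m.+2.
Proof. by have := G_rec m.+1; have := g_rec m.+2; have := g_rec m.+1; have := g_rec m; lia. Qed.

Lemma G_rec3 m : G m.+3 + G m = 3 * G m.+2 + 3 * G m.+1.
Proof. by have := G_rec m.+1; have := G_rec m; have := g_rec m; lia. Qed.

(* The closed form satisfies the same third-order recurrence: both
   2 +- sqrt 3 are roots of t^2 = 4t - 1, and -1 is the third root of
   t^3 = 3t^2 + 3t - 1 = (t + 1)(t^2 - 4t + 1). *)
Section ClosedForm.
Local Open Scope ring_scope.
Variable R : rcfType.
Let s : R := Num.sqrt 3%:R.

Definition root_sum (n : nat) : R :=
  (1 + s) * (2%:R + s) ^+ n + (1 - s) * (2%:R - s) ^+ n.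
Definition closed_g (n : nat) : R := (1 / 12%:R) * root_sum n - (1 / 6%:R) * (-1) ^+ n.

Lemma sqrt3_sq : s * s = 3%:R.
Proof. by rewrite -expr2 sqr_sqrtr // ler0n. Qed.

Lemma root_pow_rec (r : R) k : r * r = 4%:R * r - 1 ->
  r ^+ k.+2 = 4%:R * r ^+ k.+1 - r ^+ k.
Proof. by move=> r_root; rewrite !exprS mulrA r_root; ring. Qed.

Lemma root_sum_rec k : root_sum k.+2 = 4%:R * root_sum k.+1 - root_sum k.
Proof.
have rootP : (2%:R + s) * (2%:R + s) = 4%:R * (2%:R + s) - 1.
  by transitivity (4%:R + 4%:R * s + s * s); [ring | rewrite sqrt3_sq; ring].
have rootM : (2%:R - s) * (2%:R - s) = 4%:R * (2%:R - s) - 1.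
  by transitivity (4%:R - 4%:R * s + s * s); [ring | rewrite sqrt3_sq; ring].
by rewrite /root_sum (root_pow_rec _ rootP) (root_pow_rec _ rootM); ring.
Qed.

Lemma closed_g_rec k :
  closed_g k.+3 = 3%:R * closed_g k.+2 + 3%:R * closed_g k.+1 - closed_g k.
Proof. by rewrite /closed_g (root_sum_rec k.+1) (root_sum_rec k) !exprS; ring. Qed.

Lemma root_sum0 : root_sum 0 = 2%:R.
Proof. by rewrite /root_sum; ring. Qed.

Lemma root_sum1 : root_sum 1 = 10%:R.
Proof.
rewrite /root_sum !expr1; transitivity (4%:R + 2%:R * (s * s)); first by ring.
by rewrite sqrt3_sq; ring.
Qed.

Lemma g_closed_form m : (g m.+1)%:R = closed_g m.+1.
Proof.
suff: [/\ (g m.+1)%:R = closed_g m.+1, (g m.+2)%:R = closed_g m.+2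
        & (g m.+3)%:R = closed_g m.+3] by case.
elim: m => [|m [IH1 IH2 IH3]].
  have g2 : g 2 = 3%N by rewrite g_rec G1 g1.
  have g3 : g 3 = 12%N by rewrite g_rec G_rec G1 G0 g1 g2.
  rewrite g1 g2 g3 /closed_g !root_sum_rec root_sum1 root_sum0.
  by split; field.
split=> //; rewrite closed_g_rec -IH1 -IH2 -IH3.
have := g_rec3 m; move/(congr1 (fun k => k%:R : R)); rewrite !natrD => E.
by apply: (addIr (g m.+1)%:R); rewrite E; ring.
Qed.

End ClosedForm.

Theorem mainTheorem2 :
  (forall n : nat, (3 <= n)%N -> G n = (2 * G n.-1 + G n.-2 + 4 * g n.-1)%N) /\
  (forall n : nat, (2 <= n)%N -> g n = (G n.-1 + g n.-1)%N) /\
  (forall n : nat, (4 <= n)%N ->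
      (G n + G (n - 3) = 3 * G n.-1 + 3 * G n.-2)%N) /\
  (forall n : nat, (4 <= n)%N ->
      (g n + g (n - 3) = 3 * g n.-1 + 3 * g n.-2)%N) /\
  (forall (R : rcfType) (n : nat), (1 <= n)%N ->
      (((g n)%:R : R) =
        (1 / 12%:R) * ((1 + Num.sqrt 3%:R) * (2%:R + Num.sqrt 3%:R) ^+ n
                       + (1 - Num.sqrt 3%:R) * (2%:R - Num.sqrt 3%:R) ^+ n)
        - (1 / 6%:R) * (-1) ^+ n)%R).
Proof.
split; first by move=> [|[|n]] // _; exact: G_rec.
split; first by move=> [|[|n]] // _; exact: g_rec.
split; first by move=> [|[|[|n]]] // _; rewrite !subSS subn0; exact: G_rec3.
split; first by move=> [|[|[|[|n]]]] // _; rewrite !subSS subn0; exact: g_rec3.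
by move=> R [|n] // _; exact: g_closed_form.
Qed.
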